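(* Let $\Gamma\subseteq\mathbb R^n$ be an open convex set, $S\subseteq\Gamma$ a nonempty convex set, and $f:\Gamma\to\mathbb R$ a continuously differentiable function that is quasiconvex on $\Gamma$. Let $\bar S=\arg\min\{f(x)\mid x\in S\}$, and suppose $\bar x\in\bar S$ with $\nabla f(\bar x)=0$. Then $\nabla f(x)=0$ for all $x\in\bar S$. If in addition $f$ is pseudoconvex at every point $x\in S\setminus\bar S$, then $\bar S=\tilde S:=\{x\in S\mid \nabla f(x)=0\}$.
   Context: A function $f:\Gamma\to\mathbb R$ on a convex set $\Gamma$ is quasiconvex on $\Gamma$ iff $f(x+t(y-x))\le\max\{f(x),f(y)\}$ for all $x,y\in\Gamma$, $t\in[0,1]$. A differentiable function $f$ on the open set $\Gamma$ is pseudoconvex at $x\in\Gamma$ iff for every $y\in\Gamma$, $f(y)<f(x)$ implies $\nabla f(x)^T(y-x)<0$. *)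

From Stdlib Require Import Reals.
From mathcomp Require Import all_boot.
Set Implicit Arguments.
Unset Strict Implicit.
Unset Printing Implicit Defensive.

Open Scope R_scope.

Definition vec (n : nat) := 'I_n -> R.

Definition vzero {n} : vec n := fun _ => 0.
Definition vadd {n} (x y : vec n) : vec n := fun i => x i + y i.
Definition vsub {n} (x y : vec n) : vec n := fun i => x i - y i.
Definition vscale {n} (t : R) (x : vec n) : vec n := fun i => t * x i.

Definition dot {n} (x y : vec n) : R := \big[Rplus/0]_(i < n) (x i * y i).
Definition vnorm {n} (x : vec n) : R := sqrt (dot x x).

Definition vopen_set {n} (G : vec n -> Prop) : Prop :=
  forall x, G x -> exists eps, 0 < eps /\
    forall y, vnorm (vsub y x) < eps -> G y.

Definition vconvex_set {n} (G : vec n -> Prop) : Prop :=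
  forall x y t, G x -> G y -> 0 <= t <= 1 -> G (vadd x (vscale t (vsub y x))).

Definition has_gradient_at {n} (G : vec n -> Prop) (f : vec n -> R) (x g : vec n) : Prop :=
  forall eps, 0 < eps -> exists delta, 0 < delta /\
    forall y, G y -> vnorm (vsub y x) < delta ->
      Rabs (f y - f x - dot g (vsub y x)) <= eps * vnorm (vsub y x).

Definition C1_on {n} (G : vec n -> Prop) (f : vec n -> R) (gradf : vec n -> vec n) : Prop :=
  (forall x, G x -> has_gradient_at G f x (gradf x)) /\
  (forall x, G x -> forall eps, 0 < eps -> exists delta, 0 < delta /\
     forall y, G y -> vnorm (vsub y x) < delta -> vnorm (vsub (gradf y) (gradf x)) < eps).

Definition quasiconvex_on {n} (G : vec n -> Prop) (f : vec n -> R) : Prop :=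
  forall x y t, G x -> G y -> 0 <= t <= 1 ->
    f (vadd x (vscale t (vsub y x))) <= Rmax (f x) (f y).

Definition pseudoconvex_at {n} (G : vec n -> Prop) (f : vec n -> R)
    (gradf : vec n -> vec n) (x : vec n) : Prop :=
  forall y, G y -> f y < f x -> dot (gradf x) (vsub y x) < 0.

Definition argmin_set {n} (S : vec n -> Prop) (f : vec n -> R) (x : vec n) : Prop :=
  S x /\ forall y, S y -> f x <= f y.

From Stdlib Require Import Reals Lra Classical FunctionalExtensionality.
From HB Require Import structures.
From mathcomp Require Import all_boot.
Open Scope R_scope.
Set Implicit Arguments.

(* Call f flat from above at z if f y <= f z + o(|y - z|) near z.  A vanishing
   gradient makes f flat from above, and flatness from above at a point of
   differentiability forces the gradient there to vanish.  Quasiconvexity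
   transports flatness along segments: if f x <= f xbar <= f xt, where
   xt = xbar + t (x - xbar) with t < 1, then every y near xt is p + t (x - p) for
   some p near xbar, so f y <= max (f p) (f x) <= f xbar + o(|y - xt|)
   <= f xt + o(|y - xt|).  For a second minimiser x this makes the gradient vanish
   at points of [xbar, x) arbitrarily close to x, hence at x by continuity.
   Conversely, a stationary point at which f is pseudoconvex is a global
   minimiser. *)

HB.instance Definition _ :=
  Monoid.isComLaw.Build R 0 Rplus
    (fun a b c => esym (Rplus_assoc a b c)) Rplus_comm Rplus_0_l.

Lemma Rabs_le_bounds (x e : R) : Rabs x <= e -> - e <= x <= e.
Proof. by split_Rabs; lra. Qed.

Lemma dot_comm n (x y : vec n) : dot x y = dot y x.
Proof. by apply: eq_bigr => i _; rewrite Rmult_comm. Qed.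

Lemma dot_scale_r n (x y : vec n) s : dot x (vscale s y) = s * dot x y.
Proof.
apply: (big_ind2 (fun u v => u = s * v)); first by rewrite Rmult_0_r.
- by move=> u1 u2 v1 v2 -> ->; ring.
- by move=> i _; rewrite /vscale; ring.
Qed.

Lemma dot_scale_l n (x y : vec n) s : dot (vscale s x) y = s * dot x y.
Proof. by rewrite dot_comm dot_scale_r dot_comm. Qed.

Lemma dot0l n (y : vec n) : dot vzero y = 0.
Proof. by rewrite /dot big1 // => i _; rewrite /vzero Rmult_0_l. Qed.

Lemma sum_sqr_ge0 n (P : pred 'I_n) (x : vec n) :
  0 <= \big[Rplus/0]_(i < n | P i) (x i * x i).
Proof.
apply: (big_ind (fun u => 0 <= u)); [lra | by move=> u v; lra |].
by move=> i _; apply: Rle_0_sqr.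
Qed.

Lemma dot_ge0 n (x : vec n) : 0 <= dot x x.
Proof. exact: (sum_sqr_ge0 xpredT). Qed.

Lemma dot_eq0 n (x : vec n) : dot x x = 0 -> x = vzero.
Proof.
rewrite /dot => x0; apply: functional_extensionality => i.
move: x0; rewrite (bigD1 i) //= => x0.
have xi0 := Rplus_eq_0_l _ _ (Rle_0_sqr (x i)) (sum_sqr_ge0 _ x) x0.
by case: (Rmult_integral _ _ xi0).
Qed.

Lemma dot_self n (x : vec n) : dot x x = vnorm x * vnorm x.
Proof. by rewrite sqrt_sqrt //; apply: dot_ge0. Qed.

Lemma vnorm_scale n (x : vec n) s : vnorm (vscale s x) = Rabs s * vnorm x.
Proof.
rewrite /vnorm dot_scale_l dot_scale_r -Rmult_assoc sqrt_mult_alt.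
- by rewrite -sqrt_Rsqr_abs.
- exact: Rle_0_sqr.
Qed.

Lemma vnorm_sub0l n (x : vec n) : vnorm (vsub vzero x) = vnorm x.
Proof.
have -> : vsub vzero x = vscale (-1) x.
  by apply: functional_extensionality => i; rewrite /vzero /vsub /vscale; ring.
by rewrite vnorm_scale Rabs_Ropp Rabs_R1 Rmult_1_l.
Qed.

Lemma vzero_of_vnorm_le n (x : vec n) :
  (forall eps, 0 < eps -> vnorm x <= eps) -> x = vzero.
Proof.
move=> small; apply: dot_eq0; rewrite dot_self.
have x_ge0 : 0 <= vnorm x by apply: sqrt_pos.
case: (Rle_lt_or_eq_dec _ _ x_ge0) => [x_pos | <-]; last by ring.
by have := small (vnorm x / 2) ltac:(lra); lra.
Qed.

Lemma continuous_vanishing_near n m (G : vec n -> Prop) (F : vec n -> vec m) x :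
  (forall eps, 0 < eps -> exists delta, 0 < delta /\
     forall y, G y -> vnorm (vsub y x) < delta -> vnorm (vsub (F y) (F x)) < eps) ->
  (forall delta, 0 < delta -> exists y, G y /\ vnorm (vsub y x) < delta /\ F y = vzero) ->
  F x = vzero.
Proof.
move=> F_cont zeros; apply: vzero_of_vnorm_le => eps eps_pos.
have [delta [delta_pos Hdelta]] := F_cont _ eps_pos.
have [y [Gy [y_near Fy0]]] := zeros _ delta_pos.
by have := Hdelta _ Gy y_near; rewrite Fy0 vnorm_sub0l; lra.
Qed.

Lemma segment_approaches_endpoint n (xbar x : vec n) delta : 0 < delta ->
  exists t, 0 <= t < 1 /\
    vnorm (vsub (vadd xbar (vscale t (vsub x xbar))) x) < delta.
Proof.
move=> delta_pos; set D := vnorm (vsub xbar x).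
have D_ge0 : 0 <= D by apply: sqrt_pos.
set s := Rmin 1 (delta / (D + 1)).
have s_pos : 0 < s by apply: Rmin_pos; [lra | apply: Rdiv_lt_0_compat; lra].
have s_le : s * (D + 1) <= delta.
  apply: (Rle_trans _ (delta / (D + 1) * (D + 1))); last by right; field; lra.
  by apply: Rmult_le_compat_r; [lra | apply: Rmin_r].
have s_le1 : s <= 1 := Rmin_l _ _.
exists (1 - s); split; first lra.
have -> : vsub (vadd xbar (vscale (1 - s) (vsub x xbar))) x = vscale s (vsub xbar x).
  by apply: functional_extensionality => i; rewrite /vsub /vadd /vscale; ring.
by rewrite vnorm_scale Rabs_pos_eq -/D; lra.
Qed.

Definition flat_above_at n (G : vec n -> Prop) (f : vec n -> R) (z : vec n) : Prop :=
  forall eps, 0 < eps -> exists delta, 0 < delta /\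
    forall y, G y -> vnorm (vsub y z) < delta -> f y <= f z + eps * vnorm (vsub y z).

Lemma flat_above_of_gradient_eq0 n (G : vec n -> Prop) f z :
  has_gradient_at G f z vzero -> flat_above_at G f z.
Proof.
move=> grad0 eps eps_pos; have [delta [delta_pos Hdelta]] := grad0 _ eps_pos.
exists delta; split=> // y Gy y_near.
by have := Hdelta _ Gy y_near; rewrite dot0l Rminus_0_r => /Rabs_le_bounds; lra.
Qed.

Section QuasiconvexFlatness.

Variables (n : nat) (G : vec n -> Prop) (f : vec n -> R).
Hypothesis G_open : vopen_set G.

Lemma gradient_eq0_of_flat_above z g :
  G z -> has_gradient_at G f z g -> flat_above_at G f z -> g = vzero.
Proof.
move=> Gz grad_g flat; apply: vzero_of_vnorm_le => eps eps_pos.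
set N := vnorm g; have N_ge0 : 0 <= N by apply: sqrt_pos.
have eps2_pos : 0 < eps / 2 by lra.
have [d0 [d0_pos Hd0]] := G_open Gz.
have [d1 [d1_pos Hd1]] := flat _ eps2_pos.
have [d2 [d2_pos Hd2]] := grad_g _ eps2_pos.
set m := Rmin d0 (Rmin d1 d2).
have m_pos : 0 < m by apply: Rmin_pos => //; apply: Rmin_pos.
have [m_d0 m_d12] : m <= d0 /\ m <= Rmin d1 d2 by split; [apply: Rmin_l | apply: Rmin_r].
have [m_d1 m_d2] : m <= d1 /\ m <= d2.
  by split; apply: (Rle_trans _ _ _ m_d12); [apply: Rmin_l | apply: Rmin_r].
set h := m / (2 * (N + 1)).
have h_pos : 0 < h by apply: Rdiv_lt_0_compat; lra.
have hN_lt : h * N < m.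
  have hN1 : h * (2 * (N + 1)) = m by rewrite /h; field; lra.
  nra.
(* Along g, f rises at rate |g|^2, which flatness caps at eps |g|. *)
set y := vadd z (vscale h g).
have y_z : vsub y z = vscale h g.
  by apply: functional_extensionality => i; rewrite /y /vsub /vadd /vscale; ring.
have y_dist : vnorm (vsub y z) = h * N by rewrite y_z vnorm_scale Rabs_pos_eq //; lra.
have Gy : G y by apply: Hd0; lra.
have := Hd1 _ Gy ltac:(lra); rewrite y_dist => upper.
have := Hd2 _ Gy ltac:(lra).
rewrite y_z dot_scale_r dot_self -/N -y_z y_dist => /Rabs_le_bounds lower.
have : h * (N * (N - eps)) <= 0 by lra.
have : N * (N - eps) <= 0 by nra.
nra.
Qed.

Hypothesis f_qc : quasiconvex_on G f.

Lemma flat_above_along_segment xbar x t :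
  G xbar -> G x -> flat_above_at G f xbar -> f x <= f xbar ->
  f xbar <= f (vadd xbar (vscale t (vsub x xbar))) -> 0 <= t < 1 ->
  flat_above_at G f (vadd xbar (vscale t (vsub x xbar))).
Proof.
set xt := vadd xbar (vscale t (vsub x xbar)).
move=> Gxbar Gx flat fx_le fxt_ge t_range eps eps_pos.
have s_pos : 0 < 1 - t by lra.
have [d0 [d0_pos Hd0]] := G_open Gxbar.
have [d1 [d1_pos Hd1]] := flat (eps * (1 - t)) ltac:(nra).
set m := Rmin d0 d1.
have [m_d0 m_d1] : m <= d0 /\ m <= d1 by split; [apply: Rmin_l | apply: Rmin_r].
exists ((1 - t) * m); split; first by apply: Rmult_lt_0_compat => //; apply: Rmin_pos.
move=> y Gy y_near; set r := vnorm (vsub y xt) in y_near *.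
have r_ge0 : 0 <= r by apply: sqrt_pos.
(* y = p + t (x - p), where p - xbar is (y - xt) rescaled by 1 / (1 - t). *)
set p := vadd xbar (vscale (/ (1 - t)) (vsub y xt)).
have p_dist : vnorm (vsub p xbar) * (1 - t) = r.
  have -> : vsub p xbar = vscale (/ (1 - t)) (vsub y xt).
    by apply: functional_extensionality => i; rewrite /p /vsub /vadd /vscale; ring.
  rewrite vnorm_scale Rabs_pos_eq -/r; first by field; lra.
  by apply/Rlt_le/Rinv_0_lt_compat.
have p_near : vnorm (vsub p xbar) < m by nra.
have Gp : G p by apply: Hd0; lra.
have y_p : vadd p (vscale t (vsub x p)) = y.
  apply: functional_extensionality => i.
  by rewrite /p /xt /vsub /vadd /vscale; field; lra.
have := f_qc Gp Gx (conj (proj1 t_range) (Rlt_le _ _ (proj2 t_range))).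
rewrite y_p => fy_le.
have fp_le := Hd1 _ Gp ltac:(lra).
have : Rmax (f p) (f x) <= f xbar + eps * r by apply: Rmax_lub; nra.
lra.
Qed.

Variable gradf : vec n -> vec n.
Hypothesis f_C1 : C1_on G f gradf.

Lemma argmin_gradient_eq0 (S : vec n -> Prop) xbar x :
  (forall y, S y -> G y) -> vconvex_set S ->
  argmin_set S f xbar -> gradf xbar = vzero ->
  argmin_set S f x -> gradf x = vzero.
Proof.
move=> SG S_conv [Sxbar xbar_min] grad_xbar [Sx x_min].
have [f_grad grad_cont] := f_C1.
have flat_xbar : flat_above_at G f xbar.
  by apply: flat_above_of_gradient_eq0; rewrite -grad_xbar; apply/f_grad/SG.
apply: (@continuous_vanishing_near _ _ G gradf x (grad_cont x (SG _ Sx))) => delta delta_pos.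
have [t [t_range xt_near]] := segment_approaches_endpoint xbar x delta_pos.
have Sxt : S (vadd xbar (vscale t (vsub x xbar))) by apply: S_conv => //; lra.
exists (vadd xbar (vscale t (vsub x xbar))); split; first exact: SG.
split=> //.
apply: (gradient_eq0_of_flat_above (SG _ Sxt) (f_grad _ (SG _ Sxt))).
exact: (flat_above_along_segment (SG _ Sxbar) (SG _ Sx) flat_xbar
          (x_min _ Sxbar) (xbar_min _ Sxt) t_range).
Qed.

End QuasiconvexFlatness.

Lemma pseudoconvex_stationary_min n (G : vec n -> Prop) f gradf x :
  pseudoconvex_at G f gradf x -> gradf x = vzero -> forall y, G y -> f x <= f y.
Proof.
move=> pc grad0 y Gy; apply: Rnot_lt_le => fy_lt.
by have := pc _ Gy fy_lt; rewrite grad0 dot0l; lra.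
Qed.

Theorem theorem2 (n : nat) (G S : vec n -> Prop) (f : vec n -> R) (gradf : vec n -> vec n)
  (HGopen : vopen_set G) (HGconv : vconvex_set G)
  (HSsub : forall x, S x -> G x) (HSne : exists x, S x) (HSconv : vconvex_set S)
  (Hf : C1_on G f gradf) (Hqc : quasiconvex_on G f)
  (xbar : vec n) (Hxbar : argmin_set S f xbar) (Hgrad0 : gradf xbar = vzero) :
  (forall x, argmin_set S f x -> gradf x = vzero) /\
  ((forall x, S x -> ~ argmin_set S f x -> pseudoconvex_at G f gradf x) ->
   forall x, argmin_set S f x <-> (S x /\ gradf x = vzero)).
Proof.
have argmin_stationary x : argmin_set S f x -> gradf x = vzero.
  exact: (argmin_gradient_eq0 HGopen Hqc Hf HSsub HSconv Hxbar Hgrad0).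
split=> // Hpc x; split=> [x_min | [Sx grad_x]].
  by split; [exact: x_min.1 | exact: argmin_stationary].
have [// | x_not_min] := classic (argmin_set S f x).
split=> // y Sy.
exact: (pseudoconvex_stationary_min (Hpc _ Sx x_not_min) grad_x _ (HSsub _ Sy)).
Qed.
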